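(* Let $E$ be a Banach lattice. Then the norm topology and the unbounded norm topology on $E$ are both locally interval complete solidly submetrisable.
   Context: All vector lattices are real and Archimedean; linear topologies are Hausdorff. A locally solid topology on a vector lattice is a linear topology such that zero has a neighbourhood basis of solid sets. For a Banach lattice $E$ with norm topology $\tau$, the unbounded norm topology (un-topology) is the locally solid topology on $E$ having as neighbourhood basis at zero the sets $\{x\in E: \| |x|\wedge|y| \|<\varepsilon\}$ for $\varepsilon>0$ and $y\in E$. For $x\in E$, $B_x$ denotes the band generated by $x$. A locally solid topology $\tau$ on $E$ is locally interval complete solidly submetrisable if for every $x\in E^+$ there exists a metrisable locally solid topology $\widetilde\tau_x$ on $B_x$ such that (a) $\tau|_{B_x}$ is finer than $\widetilde\tau_x$, and (b) every $\widetilde\tau_x$-Cauchy sequence in $[0,x]$ is $\widetilde\tau_x$-convergent to an element of $[0,x]$. *)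

From HB Require Import structures.
From mathcomp Require Import all_boot all_order all_algebra.
From mathcomp Require Import all_classical all_reals all_analysis.
Set Implicit Arguments. Unset Strict Implicit. Unset Printing Implicit Defensive.
Import Order.TTheory GRing.Theory Num.Theory.
Import numFieldNormedType.Exports.
Local Open Scope classical_set_scope.
Local Open Scope ring_scope.

Section BanachLattice.
Variables (R : realType) (E : completeNormedModType R).
Variables (le : E -> E -> Prop) (sup : E -> E -> E).

Definition inf (x y : E) : E := - sup (- x) (- y).
Definition labs (x : E) : E := sup x (- x).

Record is_vector_lattice : Prop := {
  vl_refl : forall x, le x x;
  vl_antisym : forall x y, le x y -> le y x -> x = y;
  vl_trans : forall x y z, le x y -> le y z -> le x z;
  vl_add : forall x y z, le x y -> le (x + z) (y + z);
  vl_scale : forall (a : R) x y, 0 <= a -> le x y -> le (a *: x) (a *: y);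
  vl_sup_l : forall x y, le x (sup x y);
  vl_sup_r : forall x y, le y (sup x y);
  vl_sup_least : forall x y z, le x z -> le y z -> le (sup x y) z;
  vl_archimedean : forall x y, (forall n : nat, le (n%:R *: x) y) -> le x 0
}.

(* Banach lattice: complete normed space (given by the type of E) whose norm
   is a lattice norm. *)
Record is_banach_lattice : Prop := {
  bl_vl : is_vector_lattice;
  bl_norm : forall x y : E, le (labs x) (labs y) -> `|x| <= `|y|
}.

Definition is_sup_of (D : set E) (s : E) : Prop :=
  (forall d, D d -> le d s) /\ (forall z, (forall d, D d -> le d z) -> le s z).

Definition solid_in (B A : set E) : Prop :=
  forall x y, A x -> B y -> le (labs y) (labs x) -> A y.

Definition is_ideal (B : set E) : Prop :=
  [/\ B 0, (forall x y, B x -> B y -> B (x + y)),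
      (forall (a : R) x, B x -> B (a *: x)) & solid_in setT B].

Definition is_band (B : set E) : Prop :=
  is_ideal B /\ (forall D s, D `<=` B -> is_sup_of D s -> B s).

Definition band_gen (x : E) : set E :=
  [set y | forall B, is_band B -> B x -> B y].

Definition order_interval (a b : E) : set E := [set y | le a y /\ le y b].

(* Linear topologies on a linear subspace B of E are represented by their
   filter N of zero-neighbourhoods (subsets of B). *)
Definition is_locally_solid_on (B : set E) (N : set (set E)) : Prop :=
  [/\ (forall U, N U -> U `<=` B),
      N B,
      (forall U V, N U -> U `<=` V -> V `<=` B -> N V) &
      (forall U V, N U -> N V -> N (U `&` V))] /\
  [/\ (forall U, N U -> forall x, B x ->
          exists2 e : R, 0 < e & forall a : R, `|a| <= e -> U (a *: x)),
      (forall U, N U -> exists2 V, N V & forall a b, V a -> V b -> U (a + b)),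
      (forall U, N U -> exists2 V, N V & V `<=` U /\ solid_in B V) &
      (forall x, B x -> (forall U, N U -> U x) -> x = 0)].

Definition restr_finer (B : set E) (N N' : set (set E)) : Prop :=
  forall V, N' V -> exists2 U, N U & U `&` B `<=` V.

(* Metrisability of the linear topology N on B: some metric on B induces the
   same neighbourhoods at every point of B (neighbourhoods of p are p + U). *)
Definition metrisable_on (B : set E) (N : set (set E)) : Prop :=
  exists d : E -> E -> R,
    [/\ (forall x y, B x -> B y -> 0 <= d x y),
        (forall x y, B x -> B y -> (d x y = 0 <-> x = y)),
        (forall x y, B x -> B y -> d x y = d y x) &
        (forall x y z, B x -> B y -> B z -> d x z <= d x y + d y z)] /\
    [/\ (forall p, B p -> forall U, N U -> exists2 e : R, 0 < e &
            forall q, B q -> d p q < e -> U (q - p)) &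
        (forall p, B p -> forall e : R, 0 < e -> exists2 U, N U &
            forall q, B q -> U (q - p) -> d p q < e)].

Definition cauchy_wrt (N : set (set E)) (u : nat -> E) : Prop :=
  forall U, N U -> exists n0, forall m n, (n0 <= m)%N -> (n0 <= n)%N -> U (u m - u n).

Definition converges_wrt (N : set (set E)) (u : nat -> E) (l : E) : Prop :=
  forall U, N U -> exists n0, forall n, (n0 <= n)%N -> U (u n - l).

Definition licss (N : set (set E)) : Prop :=
  forall x, le 0 x -> exists N' : set (set E),
    [/\ is_locally_solid_on (band_gen x) N',
        metrisable_on (band_gen x) N',
        restr_finer (band_gen x) N N' &
        (forall u : nat -> E, (forall n, order_interval 0 x (u n)) ->
           cauchy_wrt N' u ->
           exists2 l, order_interval 0 x l & converges_wrt N' u l)].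

Definition norm_nbhs0 : set (set E) := [set U | nbhs (0 : E) U].

Definition un_nbhs0 : set (set E) :=
  [set U | exists e : R, exists y : E, 0 < e /\
     [set x | `| inf (labs x) (labs y) | < e] `<=` U].

End BanachLattice.

From Pilot Require Import Defs.
From HB Require Import structures.
From mathcomp Require Import all_boot all_order all_algebra.
From mathcomp Require Import all_classical all_reals all_analysis.
Import Order.TTheory GRing.Theory Num.Theory.
Import numFieldNormedType.Exports.
Local Open Scope classical_set_scope.
Local Open Scope ring_scope.

(* For 0 <= x put rho_x(w) := || |w| /\ x ||. It is subadditive, even, solid
   and dominated by the norm, and on the band B_x it vanishes only at 0: the
   disjoint complement of |w| is a band, so if |w| /\ x = 0 it contains B_x,
   hence w, and then |w| = |w| /\ |w| = 0. So rho_x(q - p) is a metric on B_x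
   whose zero-neighbourhoods form a locally solid topology, coarser than the
   norm topology and than the un-topology (rho_x-balls are the un-neighbourhoods
   with y = x). For p, q in [0, x] we have |p - q| <= x, so rho_x is the norm
   there: a rho_x-Cauchy sequence in [0, x] is norm Cauchy, and its limit stays
   in [0, x] because the positive cone is norm closed. *)

Lemma norm_lt_all_eq0 (R : numFieldType) (V : normedModType R) (v : V) :
  (forall e : R, 0 < e -> `|v| < e) -> v = 0.
Proof.
move=> small; apply/normr0_eq0/eqP; rewrite eq_le normr_ge0 andbT.
by apply/ler_addgt0Pr => e e0; rewrite add0r ltW ?small.
Qed.

Lemma norm_cauchy_seq_cvg (R : numFieldType) (E : completeNormedModType R)
    (u : nat -> E) :
  (forall e : R, 0 < e -> exists n0, forall m n,
     (n0 <= m)%N -> (n0 <= n)%N -> `|u m - u n| < e) ->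
  exists l, forall e : R, 0 < e -> exists n0, forall n,
     (n0 <= n)%N -> `|l - u n| < e.
Proof.
move=> u_cauchy.
have u_cvg : cvgn u.
  apply: cauchy_cvg; apply: cauchy_exP => e e0.
  have [n0 hn0] := u_cauchy e e0.
  by exists (u n0), n0 => // n /= hn; rewrite -ball_normE; apply: hn0.
exists (limn u) => e e0.
by have [n0 _ hn0] := proj1 (cvgrPdist_lt _ _) u_cvg e e0; exists n0.
Qed.

Section BanachLattice.
Context {R : realType} {E : completeNormedModType R}.
Context {le : E -> E -> Prop} {sup : E -> E -> E}.
Hypothesis HL : is_vector_lattice le sup.
Implicit Types (a b c d p q s t u v w x y z : E).

Local Notation inf := (Defs.inf sup).
Local Notation labs := (Defs.labs sup).
Local Notation band_gen := (Defs.band_gen le sup).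
Local Notation order_interval := (Defs.order_interval le).

Lemma lat_refl x : le x x. Proof. exact: (vl_refl HL). Qed.
Lemma lat_anti {x y} : le x y -> le y x -> x = y.
Proof. exact: (vl_antisym HL). Qed.
Lemma lat_trans {x y z} : le x y -> le y z -> le x z.
Proof. exact: (vl_trans HL). Qed.

Lemma lat_addr z {x y} : le x y -> le (x + z) (y + z).
Proof. exact: (vl_add HL). Qed.
Lemma lat_addl z {x y} : le x y -> le (z + x) (z + y).
Proof. by rewrite ![z + _]addrC; apply: lat_addr. Qed.
Lemma lat_add {a b c d} : le a b -> le c d -> le (a + c) (b + d).
Proof. by move=> /(lat_addr c) ab /(lat_addl b); apply: lat_trans. Qed.
Lemma lat_addr2 z {x y} : le (x + z) (y + z) -> le x y.
Proof. by move=> /(lat_addr (- z)); rewrite !addrK. Qed.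
Lemma lat_subr_ge0 x y : le 0 (y - x) <-> le x y.
Proof.
split; first by move=> /(lat_addr x); rewrite add0r subrK.
by move=> /(lat_addr (- x)); rewrite subrr.
Qed.
Lemma lat_subr_le0 x y : le (x - y) 0 <-> le x y.
Proof.
split; first by move=> /(lat_addr y); rewrite add0r subrK.
by move=> /(lat_addr (- y)); rewrite subrr.
Qed.
Lemma lat_oppr {x y} : le x y -> le (- y) (- x).
Proof.
by move=> /(lat_addr (- x - y)); rewrite addrA subrr add0r addrCA subrr addr0.
Qed.
Lemma lat_oppr2 {x y} : le (- y) (- x) -> le x y.
Proof. by move=> /lat_oppr; rewrite !opprK. Qed.
Lemma lat_addr_ge0 t {p} : le 0 p -> le t (t + p).
Proof. by move=> /(lat_addl t); rewrite addr0. Qed.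

Lemma lat_scale {k : R} {x y} : 0 <= k -> le x y -> le (k *: x) (k *: y).
Proof. exact: (vl_scale HL). Qed.
Lemma lat_scaler {a b : R} {p} : le 0 p -> a <= b -> le (a *: p) (b *: p).
Proof.
move=> p0 ab; apply/lat_subr_ge0; rewrite -scalerBl -(scaler0 _ (b - a)).
by apply: lat_scale; rewrite ?subr_ge0.
Qed.

Lemma sup_ubl x y : le x (sup x y). Proof. exact: (vl_sup_l HL). Qed.
Lemma sup_ubr x y : le y (sup x y). Proof. exact: (vl_sup_r HL). Qed.
Lemma sup_lub {x y z} : le x z -> le y z -> le (sup x y) z.
Proof. exact: (vl_sup_least HL). Qed.
Local Hint Resolve lat_refl sup_ubl sup_ubr : core.

Lemma supC x y : sup x y = sup y x.
Proof. by apply: lat_anti; apply: sup_lub. Qed.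
Lemma sup_idr {x y} : le x y -> sup x y = y.
Proof. by move=> xy; apply: lat_anti; first apply: sup_lub. Qed.
Lemma sup_mono {a b c d} : le a b -> le c d -> le (sup a c) (sup b d).
Proof.
by move=> ab cd; apply: sup_lub; [apply: lat_trans ab _|apply: lat_trans cd _].
Qed.
Lemma supDr z x y : sup (x + z) (y + z) = sup x y + z.
Proof.
apply: lat_anti; first by apply: sup_lub; apply: lat_addr.
apply: (lat_addr2 (- z)); rewrite addrK.
by apply: sup_lub; [rewrite -{1}(addrK z x) | rewrite -{1}(addrK z y)];
  apply: lat_addr.
Qed.

Lemma inf_lbl x y : le (inf x y) x.
Proof. by apply: lat_oppr2; rewrite opprK. Qed.
Lemma inf_lbr x y : le (inf x y) y.
Proof. by apply: lat_oppr2; rewrite opprK. Qed.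
Lemma inf_glb {x y z} : le z x -> le z y -> le z (inf x y).
Proof.
by move=> zx zy; apply: lat_oppr2; rewrite opprK; apply: sup_lub; apply: lat_oppr.
Qed.

Local Hint Resolve inf_lbl inf_lbr : core.

Lemma infC x y : inf x y = inf y x.
Proof. by rewrite /Defs.inf supC. Qed.
Lemma inf_idl {x y} : le x y -> inf x y = x.
Proof. by move=> xy; apply: lat_anti; last apply: inf_glb. Qed.
Lemma inf_mono {a b c d} : le a b -> le c d -> le (inf a c) (inf b d).
Proof.
by move=> ab cd; apply: inf_glb; [apply: lat_trans ab|apply: lat_trans cd].
Qed.
Lemma infDr z x y : inf (x + z) (y + z) = inf x y + z.
Proof. by rewrite /Defs.inf !opprD supDr opprD opprK. Qed.
Lemma inf_sup x y : inf x y = x + y - sup x y.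
Proof.
have := supDr (x + y) (- x) (- y).
rewrite addrA addNr add0r addrCA addNr addr0 supC => ->.
by rewrite /Defs.inf opprD addrCA subrr addr0.
Qed.
Lemma inf_le0P d t : le (inf d t) 0 <-> le (d + t) (sup d t).
Proof. by rewrite inf_sup; apply: lat_subr_le0. Qed.
Lemma inf_ge0 {p t} : le 0 p -> le 0 t -> le 0 (inf p t).
Proof. exact: inf_glb. Qed.

Lemma labs_ge w : le w (labs w). Proof. exact: sup_ubl. Qed.
Lemma labs_geN w : le (- w) (labs w). Proof. exact: sup_ubr. Qed.

Local Hint Resolve labs_ge labs_geN : core.

Lemma labs_ge0 w : le 0 (labs w).
Proof.
have half_ge0 : 0 <= 1 / 2 :> R by rewrite divr_ge0 ?ler0n.
have := lat_scale half_ge0 (lat_add (labs_ge w) (labs_geN w)).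
by rewrite subrr scaler0 scalerDr -scalerDl -splitr scale1r.
Qed.
Lemma labs_ger0 {p} : le 0 p -> labs p = p.
Proof.
move=> p0; have Np0 : le (- p) 0 by rewrite -oppr0; apply: lat_oppr.
by rewrite /Defs.labs supC sup_idr //; apply: lat_trans Np0 p0.
Qed.
Lemma labsN w : labs (- w) = labs w.
Proof. by rewrite /Defs.labs opprK supC. Qed.
Lemma labs_triangle a b : le (labs (a + b)) (labs a + labs b).
Proof. by apply: sup_lub; rewrite ?opprD; apply: lat_add. Qed.
Lemma labs_le0 {w} : le (labs w) 0 -> w = 0.
Proof.
move=> w0; apply: lat_anti; first exact: lat_trans (labs_ge w) w0.
by apply: lat_oppr2; rewrite oppr0; apply: lat_trans (labs_geN w) w0.
Qed.
Lemma labs_scale_le (k : R) w : le (labs (k *: w)) (`|k| *: labs w).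
Proof.
have kw_le k' : `|k'| = `|k| -> le (k' *: w) (`|k| *: labs w).
  move=> <-; have [k0|k0] := leP 0 k'.
    by rewrite ger0_norm //; apply: lat_scale.
  rewrite ltr0_norm // -[k' *: w]opprK -scaleNr -scalerN.
  by apply: lat_scale; rewrite // oppr_ge0 ltW.
by apply: sup_lub; rewrite -?scaleNr; apply: kw_le; rewrite ?normrN.
Qed.

Local Hint Resolve labs_ge0 : core.

Lemma inf_subadd {p q t} : le 0 p -> le 0 q -> le 0 t ->
  le (inf (p + q) t) (inf p t + inf q t).
Proof.
move=> p0 q0 t0; have Xt := inf_lbr (p + q) t.
rewrite -infDr; apply: inf_glb.
  rewrite [p + inf _ _]addrC -infDr; apply: inf_glb; first by rewrite addrC.
  exact: lat_trans Xt (lat_addr_ge0 t p0).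
rewrite [t + _]addrC -infDr; apply: inf_glb; apply: lat_trans Xt _.
  by rewrite addrC; apply: lat_addr_ge0.
exact: lat_addr_ge0.
Qed.

Lemma inf_scale_le {k : R} p q : 0 < k ->
  le (inf (k *: p) (k *: q)) (k *: inf p q).
Proof.
move=> k0; have kV0 : 0 <= k^-1 by rewrite invr_ge0 ltW.
have kK v : k *: (k^-1 *: v) = v by rewrite scalerA mulfV ?gt_eqF // scale1r.
have Kk v : k^-1 *: (k *: v) = v by rewrite scalerA mulVf ?gt_eqF // scale1r.
rewrite -[X in le X _]kK; apply: lat_scale (ltW k0) _.
apply: inf_glb.
  by apply: lat_trans (lat_scale kV0 (inf_lbl _ _)) _; rewrite Kk.
by apply: lat_trans (lat_scale kV0 (inf_lbr _ _)) _; rewrite Kk.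
Qed.

Lemma inf_eq0_le {p q t} : le 0 p -> le 0 t -> le p q -> inf q t = 0 ->
  inf p t = 0.
Proof.
move=> p0 t0 pq qt0; apply: lat_anti _ (inf_ge0 p0 t0).
by rewrite -qt0; apply: inf_mono.
Qed.

Lemma inf_scale_eq0 {c : R} {p t} : 0 <= c -> le 0 p -> le 0 t ->
  inf p t = 0 -> inf (c *: p) t = 0.
Proof.
(* k dominates c and 1, so c p /\ t <= k p /\ k t <= k (p /\ t). *)
move=> c0 p0 t0 pt0; set k := Num.max c 1.
have k_gt0 : 0 < k by rewrite lt_max ltr01 orbT.
have cp0 : le 0 (c *: p) by rewrite -(scaler0 _ c); apply: lat_scale.
apply: lat_anti _ (inf_ge0 cp0 t0); rewrite -(scaler0 _ k) -pt0.
apply: lat_trans (inf_scale_le p t k_gt0); apply: inf_mono.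
  by apply: lat_scaler p0 _; rewrite le_max lexx.
by rewrite -{1}(scale1r t); apply: lat_scaler t0 _; rewrite le_max lexx orbT.
Qed.

Definition perp t : set E := [set w | inf (labs w) t = 0].

Lemma perp_ideal {t} : le 0 t -> is_ideal le sup (perp t).
Proof.
move=> t0; split.
- by rewrite /perp /= labs_ger0 ?inf_idl.
- move=> x y xt yt; apply: lat_anti _ (inf_ge0 (labs_ge0 _) t0).
  have := inf_subadd (labs_ge0 x) (labs_ge0 y) t0; rewrite xt yt addr0.
  exact/lat_trans/inf_mono/lat_refl/labs_triangle.
- move=> a x xt; apply: inf_eq0_le (labs_scale_le a x) _ => //.
  exact: inf_scale_eq0.
- by move=> x y xt _ yx; apply: inf_eq0_le yx xt.
Qed.

Lemma labs_le_pos_neg s : le (labs s) (sup s 0 + sup (- s) 0).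
Proof.
apply: sup_lub.
  exact: lat_trans (sup_ubl s 0) (lat_addr_ge0 _ (sup_ubr _ _)).
by rewrite addrC; apply: lat_trans (sup_ubl (- s) 0) (lat_addr_ge0 _ (sup_ubr _ _)).
Qed.

Lemma perp_sup_closed {t} : le 0 t ->
  forall D s, D `<=` perp t -> is_sup_of le D s -> perp t s.
Proof.
(* Every d in D satisfies d /\ t <= 0, i.e. d <= d \/ t - t; hence so do s
   and s^+, which gives s^+ /\ t <= 0. The negative part s^- is below |d0|. *)
move=> t0 D s D_perp [s_ub s_lub].
have [perp0 perpD _ perp_solid] := perp_ideal t0.
have [[d0 Dd0]|noD] := pselect (exists d, D d); last first.
  have s_le z : le s z by apply: s_lub => d Dd; case: noD; exists d.
  suff -> : s = 0 by exact: perp0.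
  by apply: lat_anti (s_le 0) _; apply: (lat_addr2 s); rewrite add0r.
have s_le : le s (sup s t - t).
  apply: s_lub => d Dd.
  have /inf_le0P dt : le (inf d t) 0 by rewrite -(D_perp d Dd); apply: inf_mono.
  rewrite -(addrK t d); apply: lat_addr; apply: lat_trans dt _.
  exact: sup_mono (s_ub d Dd) _.
have perp_pos : perp t (sup s 0).
  rewrite /perp /= labs_ger0 //; apply: lat_anti _ (inf_ge0 (sup_ubr _ _) t0).
  apply/inf_le0P; apply: lat_trans _ (sup_mono (sup_ubl s 0) (lat_refl t)).
  have : le (sup s 0) (sup s t - t) by apply: sup_lub => //; apply/lat_subr_ge0.
  by move/(lat_addr t); rewrite subrK.
have perp_neg : perp t (sup (- s) 0).
  apply: perp_solid (D_perp d0 Dd0) I _.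
  rewrite labs_ger0 //; apply: sup_lub => //.
  exact: lat_trans (lat_oppr (s_ub d0 Dd0)) _.
apply: perp_solid (perpD _ _ perp_pos perp_neg) I _.
rewrite [labs (_ + _)]labs_ger0; first exact: labs_le_pos_neg.
exact: lat_trans (sup_ubr s 0) (lat_addr_ge0 _ (sup_ubr _ _)).
Qed.

Lemma perp_band {t} : le 0 t -> is_band le sup (perp t).
Proof. by move=> t0; split; [exact: perp_ideal | exact: perp_sup_closed]. Qed.

Lemma labs_subr_interval x p q : order_interval 0 x p -> order_interval 0 x q ->
  le (labs (p - q)) x.
Proof.
have sub_le a b : order_interval 0 x a -> order_interval 0 x b -> le (a - b) x.
  by move=> [_ ax] [b0 _]; rewrite -[x]subr0; apply: lat_add ax (lat_oppr b0).
by move=> px qx; apply: sup_lub; rewrite ?opprB; apply: sub_le.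
Qed.

Lemma band_gen_disjoint_eq0 {x z} : le 0 x -> band_gen x z ->
  inf (labs z) x = 0 -> z = 0.
Proof.
move=> x0 Bz zx0; have : perp (labs z) z.
  by apply: Bz; [exact: perp_band | rewrite /perp /= labs_ger0 // infC].
by rewrite /perp /= inf_idl // => z0; apply: labs_le0; rewrite z0.
Qed.

Lemma band_genD {x a b} : band_gen x a -> band_gen x b -> band_gen x (a + b).
Proof.
move=> xa xb B B_band Bx; have [[_ BD _ _] _] := B_band.
by apply: BD; [apply: xa | apply: xb].
Qed.
Lemma band_genZ {x} (k : R) {a} : band_gen x a -> band_gen x (k *: a).
Proof.
move=> xa B B_band Bx; have [[_ _ BZ _] _] := B_band; apply: BZ; exact: xa.
Qed.
Lemma band_genB {x a b} : band_gen x a -> band_gen x b -> band_gen x (a - b).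
Proof. by move=> xa /(band_genZ (-1)); rewrite scaleN1r; apply: band_genD. Qed.
Lemma band_gen_interval {x y} : order_interval 0 x y -> band_gen x y.
Proof.
move=> [y0 yx] B B_band Bx; have [[_ _ _ B_solid] _] := B_band.
by apply: B_solid Bx I _; rewrite !labs_ger0 //; apply: lat_trans y0 yx.
Qed.

Hypothesis HB : is_banach_lattice le sup.

Lemma norm_labs_le {x y} : le (labs x) (labs y) -> `|x| <= `|y|.
Proof. exact: (bl_norm HB). Qed.
Lemma norm_labs w : `|labs w| = `|w|.
Proof. by apply/eqP; rewrite eq_le !norm_labs_le // labs_ger0. Qed.
Lemma norm_le_ge0 {u v} : le 0 u -> le u v -> `|u| <= `|v|.
Proof.
by move=> u0 uv; apply: norm_labs_le; rewrite !labs_ger0 //; apply: lat_trans u0 uv.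
Qed.

Lemma ge0_norm_closed l (u : nat -> E) : (forall n, le 0 (u n)) ->
  (forall e : R, 0 < e -> exists n, `|l - u n| < e) -> le 0 l.
Proof.
move=> u0 near_l; have neg_l0 : sup (- l) 0 = 0.
  apply: norm_lt_all_eq0 => e e0; have [n ln_e] := near_l e e0.
  apply: le_lt_trans ln_e; rewrite distrC -norm_labs.
  apply: norm_le_ge0 (sup_ubr _ _) _; apply: sup_lub => //.
  by apply: lat_trans (labs_ge _); rewrite addrC; apply: lat_addr_ge0.
by apply: lat_oppr2; rewrite oppr0 -neg_l0.
Qed.

Definition rho x w := `|inf (labs w) x|.

Section Rho.
Variable x : E.
Hypothesis x0 : le 0 x.

Lemma rho_le_norm w : rho x w <= `|w|.
Proof. by rewrite -norm_labs; apply: norm_le_ge0; first exact: inf_ge0. Qed.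

Lemma rhoD a b : rho x (a + b) <= rho x a + rho x b.
Proof.
apply: le_trans (ler_normD _ _); apply: norm_le_ge0; first exact: inf_ge0.
apply: lat_trans (inf_mono (labs_triangle a b) (lat_refl x)) _.
exact: inf_subadd.
Qed.

Lemma rhoN w : rho x (- w) = rho x w.
Proof. by rewrite /rho labsN. Qed.

Lemma rho_solid {y w} : le (labs y) (labs w) -> rho x y <= rho x w.
Proof. by move=> yw; apply: norm_le_ge0; [exact: inf_ge0 | exact: inf_mono]. Qed.

Lemma rho_norm {w} : le (labs w) x -> rho x w = `|w|.
Proof. by move=> wx; rewrite /rho inf_idl // norm_labs. Qed.

Lemma rho_scale_small y {e : R} : 0 < e ->
  exists2 k : R, 0 < k & forall a : R, `|a| <= k -> rho x (a *: y) < e.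
Proof.
move=> e0; have y1_gt0 : 0 < `|y| + 1 by rewrite ltr_wpDl.
exists (e / (`|y| + 1)) => [|a a_le]; first exact: divr_gt0.
apply: le_lt_trans (rho_le_norm _) _; rewrite normrZ.
apply: le_lt_trans (ler_wpM2r (normr_ge0 y) a_le) _.
by rewrite mulrAC ltr_pdivrMr // ltr_pM2l // ltrDl.
Qed.

Definition rho_ball (e : R) := [set w | band_gen x w /\ rho x w < e].

Definition rho_nbhs0 : set (set E) :=
  [set V | V `<=` band_gen x /\ exists2 e : R, 0 < e & rho_ball e `<=` V].

Lemma rho_nbhs0_ball {e} : 0 < e -> rho_nbhs0 (rho_ball e).
Proof. by move=> e0; split; [move=> w [] | exists e]. Qed.

Lemma rho_nbhs0_locally_solid :
  is_locally_solid_on le sup (band_gen x) rho_nbhs0.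
Proof.
split; split.
- by move=> U [].
- by split => //; exists 1 => // w [].
- by move=> U V [_ [e e0 eU]] UV VB; split => //; exists e => // w /eU/UV.
- move=> U V [UB [e e0 eU]] [_ [f f0 fV]]; split; first by move=> w [/UB].
  exists (Order.min e f); first by rewrite lt_min e0 f0.
  by move=> w [xw]; rewrite lt_min => /andP[we wf]; split; [apply: eU|apply: fV].
- move=> U [_ [e e0 eU]] y xy; have [k k0 small] := rho_scale_small y e0.
  by exists k => // a ak; apply: eU; split; [exact: band_genZ | exact: small].
- move=> U [_ [e e0 eU]]; exists (rho_ball (e / 2)).
    by apply: rho_nbhs0_ball; rewrite divr_gt0.
  move=> a b [xa ae] [xb be]; apply: eU; split; first exact: band_genD.
  by apply: le_lt_trans (rhoD a b) _; rewrite [e]splitr ltrD.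
- move=> U [_ [e e0 eU]]; exists (rho_ball e); first exact: rho_nbhs0_ball.
  split => // a b [xa ae] xb ba; split => //.
  exact: le_lt_trans (rho_solid ba) ae.
- move=> w xw w_small; apply: band_gen_disjoint_eq0 x0 xw _.
  by apply: norm_lt_all_eq0 => e e0; have [_] := w_small _ (rho_nbhs0_ball e0).
Qed.

Lemma rho_nbhs0_metrisable : metrisable_on (band_gen x) rho_nbhs0.
Proof.
exists (fun p q => rho x (q - p)); split; split.
- by move=> p q _ _; apply: normr_ge0.
- move=> p q xp xq; split => [pq0|->]; last first.
    by rewrite subrr rho_norm ?normr0 // labs_ger0.
  apply/eqP; rewrite eq_sym -subr_eq0; apply/eqP.
  by apply: band_gen_disjoint_eq0 x0 (band_genB xq xp) _; apply/normr0_eq0.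
- by move=> p q _ _; rewrite -rhoN opprB.
- move=> p q r _ _ _; have -> : r - p = (r - q) + (q - p) by rewrite addrA subrK.
  by rewrite [X in _ <= X]addrC; apply: rhoD.
- move=> p xp U [_ [e e0 eU]]; exists e => // q xq pq_e.
  by apply: eU; split => //; apply: band_genB.
- move=> p xp e e0; exists (rho_ball e); first exact: rho_nbhs0_ball.
  by move=> q _ [].
Qed.

Lemma rho_nbhs0_interval_complete (u : nat -> E) :
  (forall n, order_interval 0 x (u n)) -> cauchy_wrt rho_nbhs0 u ->
  exists2 l, order_interval 0 x l & converges_wrt rho_nbhs0 u l.
Proof.
move=> u_int u_cauchy.
have [l l_lim] : exists l, forall e : R, 0 < e ->
    exists n0, forall n, (n0 <= n)%N -> `|l - u n| < e.
  apply: norm_cauchy_seq_cvg => e e0.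
  have [n0 u_n0] := u_cauchy _ (rho_nbhs0_ball e0).
  exists n0 => m n m_ge n_ge; have [_] := u_n0 m n m_ge n_ge.
  by rewrite rho_norm //; apply: labs_subr_interval.
have l_near e : 0 < e -> exists n, `|l - u n| < e.
  by move=> e0; have [n0 ln] := l_lim e e0; exists n0; apply: ln.
have l_int : order_interval 0 x l.
  split; first exact: ge0_norm_closed (fun n => (u_int n).1) l_near.
  apply/lat_subr_ge0; apply: (@ge0_norm_closed _ (fun n => x - u n)).
    by move=> n; apply/lat_subr_ge0; case: (u_int n).
  move=> e e0; have [n ln] := l_near e e0; exists n.
  have -> : x - l - (x - u n) = u n - l by rewrite opprB addrC addrA subrK.
  by rewrite distrC.
exists l => // U [_ [e e0 eU]]; have [n0 ln] := l_lim e e0.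
exists n0 => n n_ge; apply: eU; split.
  exact: band_genB (band_gen_interval (u_int n)) (band_gen_interval l_int).
by apply: le_lt_trans (rho_le_norm _) _; rewrite distrC; apply: ln.
Qed.

End Rho.

Lemma licss_of_rho_finer N :
  (forall x, le 0 x -> restr_finer (band_gen x) N (rho_nbhs0 x)) ->
  licss le sup N.
Proof.
move=> finer x x0; exists (rho_nbhs0 x); split.
- exact: rho_nbhs0_locally_solid.
- exact: rho_nbhs0_metrisable.
- exact: finer.
- exact: rho_nbhs0_interval_complete.
Qed.

Lemma norm_nbhs0_finer x : le 0 x ->
  restr_finer (band_gen x) (@norm_nbhs0 R E) (rho_nbhs0 x).
Proof.
move=> x0 V [_ [e e0 eV]]; exists [set w | `|w| < e].
  by apply/nbhs_norm0P; exists e.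
move=> w [we xw]; apply: eV; split => //.
exact: le_lt_trans (rho_le_norm _ x0 w) we.
Qed.

Lemma un_nbhs0_finer x : le 0 x ->
  restr_finer (band_gen x) (un_nbhs0 sup) (rho_nbhs0 x).
Proof.
move=> x0 V [_ [e e0 eV]]; exists [set w | `|inf (labs w) (labs x)| < e].
  by exists e, x; split.
by move=> w [we xw]; apply: eV; split; rewrite // /rho -[X in inf _ X](labs_ger0 x0).
Qed.

End BanachLattice.

Theorem proposition3p9 (R : realType) (E : completeNormedModType R)
    (le : E -> E -> Prop) (sup : E -> E -> E) :
  is_banach_lattice le sup ->
  licss le sup (@norm_nbhs0 R E) /\ licss le sup (un_nbhs0 sup).
Proof.
move=> HB; have HL := bl_vl HB.
split; apply: (licss_of_rho_finer HL HB) => x x0.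
- exact: norm_nbhs0_finer.
- exact: un_nbhs0_finer.
Qed.
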